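(* Let $(\breve{r}^{(k)})_{k\ge 0}$ be independent real-valued random variables with $\Pr(\breve{r}^{(k)}<0)=\Pr(\breve{r}^{(k)}>0)=\tfrac12$ for all $k$, and for $k\ge1$ let $\psi^{(k)}=1$ if $\mathrm{sgn}(\breve{r}^{(k)})=-\mathrm{sgn}(\breve{r}^{(k-1)})$ and $\psi^{(k)}=0$ otherwise. Fix an integer $\ell\ge 10$ and define the Memoryless Runtime Estimator $$\hat H^{(0)}=\tfrac12,\qquad \hat H^{(k)}=\hat H^{(k-1)}+\frac{\psi^{(k)}-\hat H^{(k-1)}}{\ell},\quad k\ge1.$$ Then the (steady-state) variance of the sign-switching rate estimate is $$\mathrm{Var}[H]=\lim_{k\to\infty}\mathrm{Var}[\hat H^{(k)}]=\frac{\mathbb{E}[H](1-\mathbb{E}[H])}{2\ell-1}=\frac{1}{4(2\ell-1)},$$ where $\mathbb{E}[H]=\tfrac12$ is the expected sign-switching rate.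
   Context: This models a monitoring vehicle $i$ observing a neighbor vehicle $j$ that follows a ''hidden'' virtual spring-damper control model. $\breve{r}^{(k)}$ is the hidden velocity residual (received velocity magnitude of $j$ minus its prediction under the hidden model), modeled under the hidden model as a random sequence with positive and negative values each of probability $\tfrac12$; $\psi^{(k)}$ is the alarm indicating a sign switch at time $k$; $\ell$ is the ''pseudo-window'' length of the estimator and $\hat H^{(k)}\in[0,1]$ is the run-time estimate of the sign-switching alarm rate. *)

From HB Require Import structures.
From mathcomp Require Import all_boot all_order all_algebra.
From mathcomp Require Import all_classical all_reals all_analysis.
Set Implicit Arguments. Unset Strict Implicit. Unset Printing Implicit Defensive.
Import Order.TTheory GRing.Theory Num.Theory.
Local Open Scope classical_set_scope.
Local Open Scope ring_scope.

Definition mutually_independent d (T : measurableType d) (R : realType)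
  (P : probability T R) (X : nat -> T -> R) : Prop :=
  forall (s : seq nat) (B : nat -> set R),
    uniq s -> (forall i, i \in s -> measurable (B i)) ->
    P (\big[setI/setT]_(i <- s) (X i @^-1` B i)) =
    (\prod_(i <- s) P (X i @^-1` B i))%E.

Definition psi {T} {R : realType} (r : nat -> T -> R) (k : nat) (w : T) : R :=
  if Num.sg (r k w) == - Num.sg (r k.-1 w) then 1 else 0.

Fixpoint Hhat {T} {R : realType} (ell : nat) (r : nat -> T -> R) (k : nat)
  (w : T) : R :=
  match k with
  | 0 => 1 / 2
  | k'.+1 => Hhat ell r k' w + (psi r k'.+1 w - Hhat ell r k' w) / ell%:R
  end.

From HB Require Import structures.
From mathcomp Require Import all_boot all_order all_algebra.
From mathcomp Require Import all_classical all_reals all_analysis.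
From mathcomp Require Import measurable_realfun ring lra zify.
Set Implicit Arguments.
Unset Strict Implicit.
Unset Printing Implicit Defensive.

Import Order.TTheory GRing.Theory Num.Theory.
Import numFieldNormedType.Exports.
Local Open Scope classical_set_scope.
Local Open Scope ring_scope.

(* Write s_k for the sign of r^(k).  The alarm psi^(k) is the indicator that
   (s_(k-1), s_k) is one of (-1, 1), (0, 0), (1, -1), so products of alarms are
   sums of indicators of sign patterns [s_i = sigma_i for i in I]; when the
   indices in I are distinct, independence gives such a pattern probability
   prod_i p(sigma_i), with p(1) = p(-1) = 1/2 and p(0) = 0.  Hence
   E psi^(k) = 1/2 and E[psi^(i) psi^(j)] = 1/4 for 0 < i < j, whether or not
   the two alarms share a residual.  As psi^2 = psi and
   H^(k+1) = (1 - u) H^(k) + u psi^(k+1) with u = 1/ell, this yields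
   E H^(k) = 1/2, E[H^(k) psi^(m)] = 1/4 for k < m, and a variance obeying
   V_(k+1) = (1 - u)^2 V_k + u^2/4, V_0 = 0.  So
   V_k = V (1 - (1 - u)^(2k)) with the fixed point
   V = u / (4 (2 - u)) = 1 / (4 (2 ell - 1)). *)

Lemma uniq_keys_graph (K V : eqType) (v0 : V) (ps : seq (K * V)) :
  uniq (unzip1 ps) -> exists f : K -> V, forall p, p \in ps -> f p.1 = p.2.
Proof.
elim: ps => [|[k v] ps IHps] /=; first by exists (fun=> v0).
case/andP=> k_notin /IHps[f fE].
exists (fun i => if i == k then v else f i) => -[i w].
rewrite inE => /orP[/eqP[-> ->]|p_in]; first by rewrite eqxx.
rewrite ifN ?fE //; apply: contraNneq k_notin => <-.
exact: (map_f fst p_in).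
Qed.

Section signs.
Context {R : realType}.

Definition signs : seq R := [:: -1; 0; 1].

Lemma signs_uniq : uniq signs.
Proof.
by rewrite /= !inE !negb_or !andbT -andbA; apply/and3P; split; apply/eqP; lra.
Qed.

Lemma sgr_in_signs (x : R) : Num.sg x \in signs.
Proof. by rewrite !inE; case: sgrP; rewrite eqxx ?orbT. Qed.

Lemma sum_signs_delta (x : R) (F : R -> R) :
  \sum_(s <- signs) (Num.sg x == s)%:R * F s = F (Num.sg x).
Proof.
rewrite (big_rem _ (sgr_in_signs x)) eqxx mul1r big1_seq => [|s /andP[_]].
  exact: addr0.
rewrite (mem_rem_uniq _ signs_uniq) => /andP[/negPf].
by rewrite eq_sym => ->; rewrite mul0r.
Qed.

Lemma measurable_sgr : measurable_fun setT (Num.sg : R -> R).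
Proof.
have -> : Num.sg = (\1_`]0, +oo[ \- \1_`]-oo, 0[ : R -> R).
  apply/funext => x /=; rewrite !indicE !mem_setE !in_itv /= andbT.
  by case: sgrP => x0; rewrite ?x0 ?(lt_gtF x0) ?ltxx ?subrr ?subr0 ?sub0r.
by apply: measurable_funB; apply/measurable_indicP; exact: measurable_itv.
Qed.

Lemma measurable_sgr_eq (s : R) : measurable [set x : R | Num.sg x = s].
Proof.
rewrite -[X in measurable X]setTI.
exact: measurable_sgr (measurable_set1 s).
Qed.

Definition sign_prob (s : R) : R := (`|s| == 1)%:R / 2.

Lemma sign_probN s : sign_prob (- s) = sign_prob s.
Proof. by rewrite /sign_prob normrN. Qed.

Lemma sign_prob0 : sign_prob 0 = 0.
Proof. by rewrite /sign_prob normr0 eq_sym oner_eq0 mul0r. Qed.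

Lemma sign_prob1 : sign_prob 1 = 1 / 2.
Proof. by rewrite /sign_prob normr1 eqxx. Qed.

End signs.

Section bounded_expectation.
Context d (T : measurableType d) (R : realType).

Definition bounded_measurable (f : T -> R) :=
  measurable_fun setT f /\ exists M, forall x, `|f x| <= M.

Lemma bounded_measurable_cst (c : R) : bounded_measurable (fun=> c).
Proof. by split; [exact: measurable_cst | exists `|c|]. Qed.

Lemma bounded_measurable_indic (A : set T) :
  measurable A -> bounded_measurable (\1_A : T -> R).
Proof.
move=> mA; split; first exact/measurable_indicP.
by exists 1 => x; rewrite indicE; case: (x \in A); rewrite ?normr1 ?normr0.
Qed.

Lemma bounded_measurableD (f g : T -> R) : bounded_measurable f ->
  bounded_measurable g -> bounded_measurable (fun x => f x + g x).
Proof.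
move=> [mf [M fM]] [mg [N gN]]; split; first exact: measurable_funD.
by exists (M + N) => x; rewrite (le_trans (ler_normD _ _)) ?lerD.
Qed.

Lemma bounded_measurableM (f g : T -> R) : bounded_measurable f ->
  bounded_measurable g -> bounded_measurable (fun x => f x * g x).
Proof.
move=> [mf [M fM]] [mg [N gN]]; split; first exact: measurable_funM.
by exists (M * N) => x; rewrite normrM ler_pM.
Qed.

Lemma bounded_measurableZ (k : R) (f : T -> R) :
  bounded_measurable f -> bounded_measurable (fun x => k * f x).
Proof. exact: bounded_measurableM (bounded_measurable_cst k). Qed.

Lemma bounded_measurable_sum (I : Type) (s : seq I) (F : I -> T -> R) :
  (forall i, bounded_measurable (F i)) ->
  bounded_measurable (fun x => \sum_(i <- s) F i x).
Proof.
move=> bF; elim: s => [|i s IHs].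
  by under eq_fun do rewrite big_nil; exact: bounded_measurable_cst.
by under eq_fun do rewrite big_cons; exact: bounded_measurableD.
Qed.

Variable P : probability T R.

Lemma bounded_measurable_Lfun1 (f : T -> R) :
  bounded_measurable f -> f \in Lfun P 1.
Proof.
move=> [mf [M fM]]; apply/Lfun1_integrable/measurable_bounded_integrable => //.
  by rewrite (le_lt_trans (probability_le1 _ measurableT)) ?ltry.
exists M; split; first exact: num_real.
by move=> y /ltW My x _ /=; rewrite (le_trans (fM x)).
Qed.

Lemma expectation_boundedD (f g : T -> R) : bounded_measurable f ->
  bounded_measurable g -> ('E_P[fun x => (f x + g x)%R] = 'E_P[f] + 'E_P[g])%E.
Proof.
move=> /bounded_measurable_Lfun1 f1 /bounded_measurable_Lfun1 g1.
by rewrite -expectationD.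
Qed.

Lemma expectation_boundedZ (k : R) (f : T -> R) : bounded_measurable f ->
  ('E_P[fun x => (k * f x)%R] = k%:E * 'E_P[f])%E.
Proof.
move=> /bounded_measurable_Lfun1 f1; rewrite -expectationZl //.
by congr expectation; apply/funext => x /=; rewrite mulrC.
Qed.

Lemma expectation_bounded_sum (I : Type) (s : seq I) (F : I -> T -> R) :
  (forall i, bounded_measurable (F i)) ->
  ('E_P[fun x => (\sum_(i <- s) F i x)%R] = \sum_(i <- s) 'E_P[F i])%E.
Proof.
move=> bF; elim: s => [|i s IHs].
  by under eq_fun do rewrite big_nil; rewrite big_nil expectation_cst.
under eq_fun do rewrite big_cons.
by rewrite expectation_boundedD ?big_cons ?IHs //; exact: bounded_measurable_sum.
Qed.

(* [varianceE] would require [X \in Lfun P 2%:E]. *)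
Lemma variance_bounded (X : T -> R) (m : R) : bounded_measurable X ->
  ('E_P[X] = m%:E -> 'V_P[X] = 'E_P[fun x => (X x * X x)%R] - (m ^+ 2)%:E)%E.
Proof.
move=> bX EX; rewrite /variance covariance.unlock EX /=.
have bXX := bounded_measurableM bX bX.
have bmX := bounded_measurableM (bounded_measurable_cst (- (2 * m))) bX.
transitivity 'E_P[fun x => (X x * X x + - (2 * m) * X x) + m ^+ 2]%R%E.
  by congr expectation; apply/funext => x; rewrite mulrfctE /=; ring.
rewrite expectation_boundedD; last 2 first.
- exact: bounded_measurableD.
- exact: bounded_measurable_cst.
rewrite expectation_boundedD // expectation_boundedZ // EX expectation_cst.
by rewrite -addeA -EFinM -EFinD; congr (_ + _%:E); ring.
Qed.

End bounded_expectation.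

Section sign_events.
Context d (T : measurableType d) (R : realType) (P : probability T R).
Variable r : nat -> T -> R.
Hypothesis r_measurable : forall k, measurable_fun setT (r k).

Definition sign_event k (s : R) : set T := r k @^-1` [set x | Num.sg x = s].

Definition sign_pattern (ps : seq (nat * R)) : set T :=
  \big[setI/setT]_(p <- ps) sign_event p.1 p.2.

Lemma in_sign_event k s w : (w \in sign_event k s) = (Num.sg (r k w) == s).
Proof. by apply/idP/eqP => [/set_mem|?]; last exact: mem_set. Qed.

Lemma measurable_sign_event k s : measurable (sign_event k s).
Proof.
rewrite -[X in measurable X]setTI.
exact: r_measurable (measurable_sgr_eq s).
Qed.

Lemma measurable_sign_pattern ps : measurable (sign_pattern ps).
Proof. by apply: bigsetI_measurable => p _; exact: measurable_sign_event. Qed.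

Lemma indic_sign_pattern ps w :
  \1_(sign_pattern ps) w = \prod_(p <- ps) (Num.sg (r p.1 w) == p.2)%:R :> R.
Proof.
elim: ps => [|p ps IHps]; first by rewrite /sign_pattern !big_nil indicE in_setT.
rewrite /sign_pattern big_cons indicI /= -/(sign_pattern ps) IHps.
by rewrite big_cons indicE in_sign_event.
Qed.

Definition switch_pattern k (s : R) : seq (nat * R) := [:: (k.-1, s); (k, - s)].

Lemma psi_sum_switch k w :
  psi r k w = \sum_(s <- signs) \1_(sign_pattern (switch_pattern k s)) w.
Proof.
under eq_bigr do rewrite indic_sign_pattern !big_cons big_nil mulr1 /=.
by rewrite sum_signs_delta /psi; case: eqP.
Qed.

Lemma psiM_far i j w : psi r i w * psi r j w = \sum_(s <- signs) \sum_(t <- signs)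
  \1_(sign_pattern (switch_pattern i s ++ switch_pattern j t)) w.
Proof.
rewrite !psi_sum_switch mulr_suml; apply: eq_bigr => s _.
by rewrite mulr_sumr; apply: eq_bigr => t _; rewrite !indic_sign_pattern big_cat.
Qed.

Lemma psiM_adjacent k w : psi r k w * psi r k.+1 w =
  \sum_(s <- signs) \1_(sign_pattern [:: (k.-1, s); (k, - s); (k.+1, s)]) w.
Proof.
under eq_bigr do rewrite indic_sign_pattern !big_cons big_nil mulr1 /=.
rewrite sum_signs_delta /psi /=.
by case: eqP => [->|_]; rewrite ?opprK ?mul0r //; case: eqP; rewrite ?mul1r.
Qed.

Lemma psi_idem k w : psi r k w * psi r k w = psi r k w.
Proof. by rewrite /psi; case: ifP; rewrite ?mulr1 ?mulr0. Qed.

Lemma bounded_measurable_psi k : bounded_measurable (psi r k).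
Proof.
rewrite (funext (psi_sum_switch k)); apply: bounded_measurable_sum => s.
exact/bounded_measurable_indic/measurable_sign_pattern.
Qed.

Section probabilities.
Hypothesis r_indep : mutually_independent P r.
Hypothesis r_neg : forall k, P (r k @^-1` [set x | x < 0]) = (1 / 2)%:E.
Hypothesis r_pos : forall k, P (r k @^-1` [set x | 0 < x]) = (1 / 2)%:E.

Lemma sign_eventN1 k : sign_event k (-1) = r k @^-1` [set x | x < 0].
Proof. by apply/seteqP; split => w /=; rewrite -sgr_cp0 => /eqP. Qed.

Lemma sign_event1 k : sign_event k 1 = r k @^-1` [set x | 0 < x].
Proof. by apply/seteqP; split => w /=; rewrite -sgr_cp0 => /eqP. Qed.

Lemma prob_sign_event0 k : P (sign_event k 0) = 0%E.
Proof.
have PN1 : P (sign_event k (-1)) = (1 / 2)%:E by rewrite sign_eventN1 r_neg.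
have P1 : P (sign_event k 1) = (1 / 2)%:E by rewrite sign_event1 r_pos.
have disj : sign_event k (-1) `&` sign_event k 1 = set0.
  by apply/seteqP; split => // w []; rewrite /sign_event /= => ->; lra.
have -> : sign_event k 0 = ~` (sign_event k (-1) `|` sign_event k 1).
  apply/seteqP; split => w /=; rewrite /sign_event /=.
    by move=> -> []; lra.
  by case: sgrP => _ // []; [right|left].
rewrite probability_setC ?measureU //; try exact: measurable_sign_event; last first.
  by apply: measurableU; exact: measurable_sign_event.
transitivity (1 - ((1 / 2 : R)%:E + (1 / 2 : R)%:E))%E; first by congr (1 - (_ + _))%E.
by rewrite -EFinD; congr EFin; lra.
Qed.

Lemma prob_sign_event k s : P (sign_event k s) = (sign_prob s)%:E.
Proof.
have [|s_signs] := boolP (s \in signs).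
  rewrite !inE => /or3P[] /eqP ->.
  - by rewrite sign_eventN1 r_neg sign_probN sign_prob1.
  - by rewrite prob_sign_event0 sign_prob0.
  - by rewrite sign_event1 r_pos sign_prob1.
have -> : sign_event k s = set0.
  by apply/seteqP; split => // w /= sgs; move: s_signs; rewrite -sgs sgr_in_signs.
rewrite measure0 /sign_prob eqr_norml ler01 andbT.
by move: s_signs; rewrite !inE !negb_or => /and3P[/negPf-> _ /negPf->]; rewrite mul0r.
Qed.

Lemma prob_sign_pattern ps : uniq (unzip1 ps) ->
  P (sign_pattern ps) = (\prod_(p <- ps) sign_prob p.2)%:E.
Proof.
move=> ps_uniq; have [f fE] := uniq_keys_graph 0 ps_uniq.
have -> : sign_pattern ps =
    \big[setI/setT]_(i <- unzip1 ps) r i @^-1` [set x | Num.sg x = f i].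
  by rewrite /sign_pattern big_map; apply: eq_big_seq => p /fE ->.
rewrite r_indep //; last by move=> i _; exact: measurable_sgr_eq.
rewrite big_map -prodEFin; apply: eq_big_seq => p /fE <-.
exact: prob_sign_event.
Qed.

Lemma expectation_sign_pattern ps : uniq (unzip1 ps) ->
  'E_P[\1_(sign_pattern ps)]%E = (\prod_(p <- ps) sign_prob p.2)%:E.
Proof.
move=> ps_uniq.
by rewrite expectation_indic ?prob_sign_pattern //; exact: measurable_sign_pattern.
Qed.

Lemma expectation_psi k : (0 < k)%N -> 'E_P[psi r k]%E = (1 / 2)%:E.
Proof.
move=> k_gt0; have uk s : uniq (unzip1 (switch_pattern k s)).
  by rewrite /= inE andbT -subn1; lia.
rewrite (funext (psi_sum_switch k)) expectation_bounded_sum; last first.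
  by move=> s; exact/bounded_measurable_indic/measurable_sign_pattern.
rewrite (eq_bigr _ (fun s _ => expectation_sign_pattern (uk s))) sumEFin.
by rewrite !big_cons !big_nil /= !sign_probN sign_prob0 sign_prob1; congr EFin; lra.
Qed.

Lemma expectation_psiM i j : (0 < i < j)%N ->
  'E_P[fun w => (psi r i w * psi r j w)%R]%E = (1 / 4)%:E.
Proof.
case/andP=> i_gt0 ij; have [j_far|j_next] := ltnP i.+1 j.
  have u s t : uniq (unzip1 (switch_pattern i s ++ switch_pattern j t)).
    by rewrite /= !inE andbT -!subn1; lia.
  rewrite (funext (psiM_far i j)) expectation_bounded_sum; last first.
    move=> s; apply: bounded_measurable_sum => t.
    exact/bounded_measurable_indic/measurable_sign_pattern.
  under eq_bigr => s _.
    rewrite expectation_bounded_sum; last first.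
      by move=> t; exact/bounded_measurable_indic/measurable_sign_pattern.
    rewrite (eq_bigr _ (fun t _ => expectation_sign_pattern (u s t))) sumEFin.
  over.
  rewrite sumEFin !big_cons !big_nil /= !sign_probN sign_prob0 sign_prob1.
  by congr EFin; lra.
have -> : j = i.+1 by apply/eqP; rewrite eqn_leq j_next ij.
have u (s : R) : uniq (unzip1 [:: (i.-1, s); (i, - s); (i.+1, s)]).
  by rewrite /= !inE andbT -!subn1; lia.
rewrite (funext (psiM_adjacent i)) expectation_bounded_sum; last first.
  by move=> s; exact/bounded_measurable_indic/measurable_sign_pattern.
rewrite (eq_bigr _ (fun s _ => expectation_sign_pattern (u s))) sumEFin.
by rewrite !big_cons !big_nil /= !sign_probN sign_prob0 sign_prob1; congr EFin; lra.
Qed.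

End probabilities.
End sign_events.

Lemma cvg_mul_one_subX (R : realType) (c z : R) :
  `|z| < 1 -> c * (1 - z ^+ k) @[k --> \oo] --> c.
Proof.
move=> z_lt1; have : 1 - z ^+ k @[k --> \oo] --> (1 - 0 : R).
  by apply: cvgB; [exact: cvg_cst | exact: cvg_expr].
by rewrite subr0 => /(cvgMl_tmp (a := c)); rewrite mulr1.
Qed.

Section estimator.
Context d (T : measurableType d) (R : realType) (P : probability T R).
Variable r : nat -> T -> R.
Hypothesis psi_bounded : forall k, bounded_measurable (psi r k).
Hypothesis psi_mean : forall k, (0 < k)%N -> 'E_P[psi r k]%E = (1 / 2)%:E.
Hypothesis psi_corr : forall i j, (0 < i < j)%N ->
  'E_P[fun w => (psi r i w * psi r j w)%R]%E = (1 / 4)%:E.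

Variable ell : nat.
Local Notation H := (Hhat ell r).
Local Notation u := (ell%:R^-1 : R).

Lemma HhatS k w : H k.+1 w = (1 - u) * H k w + u * psi r k.+1 w.
Proof. by rewrite /=; ring. Qed.

Lemma bounded_measurable_Hhat k : bounded_measurable (H k).
Proof.
elim: k => [|k IHk]; first exact: bounded_measurable_cst.
rewrite (funext (HhatS k)).
by apply: bounded_measurableD; exact: bounded_measurableZ.
Qed.

Lemma expectation_Hhat k : 'E_P[H k]%E = (1 / 2)%:E.
Proof.
elim: k => [|k IHk]; first exact: expectation_cst.
rewrite (funext (HhatS k)) expectation_boundedD; last 2 first.
- exact/bounded_measurableZ/bounded_measurable_Hhat.
- exact/bounded_measurableZ/psi_bounded.
have bH := bounded_measurable_Hhat k; have bpsi := psi_bounded k.+1.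
rewrite !expectation_boundedZ // IHk psi_mean //.
by rewrite -!EFinM -EFinD; congr EFin; ring.
Qed.

Lemma expectation_HhatM_psi k m : (k < m)%N ->
  'E_P[fun w => (H k w * psi r m w)%R]%E = (1 / 4)%:E.
Proof.
elim: k => [|k IHk] km.
  rewrite expectation_boundedZ ?psi_mean //.
  by rewrite -EFinM; congr EFin; lra.
have -> : (fun w => H k.+1 w * psi r m w) =
    (fun w => (1 - u) * (H k w * psi r m w) + u * (psi r k.+1 w * psi r m w)).
  by apply/funext => w; rewrite HhatS; ring.
have bHpsi := bounded_measurableM (bounded_measurable_Hhat k) (psi_bounded m).
have bpsi2 := bounded_measurableM (psi_bounded k.+1) (psi_bounded m).
rewrite expectation_boundedD; last 2 first.
- exact: bounded_measurableZ bHpsi.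
- exact: bounded_measurableZ bpsi2.
rewrite !expectation_boundedZ // IHk ?psi_corr ?(ltnW km) //.
by rewrite -!EFinM -EFinD; congr EFin; ring.
Qed.

Hypothesis ell_gt0 : (0 < ell)%N.
Local Notation Vinf := (1 / (4 * (2 * ell%:R - 1)) : R).

Let ell_ge1 : (1 : R) <= ell%:R. Proof. by rewrite ler1n. Qed.

Let ell_neq0 : ell%:R != 0 :> R. Proof. by rewrite pnatr_eq0 -lt0n. Qed.

Let ell2_neq0 : 2 * ell%:R - 1 != 0 :> R.
Proof. by apply/eqP; have := ell_ge1; lra. Qed.

Lemma expectation_Hhat_sqr k : 'E_P[fun w => (H k w * H k w)%R]%E =
  (1 / 4 + Vinf * (1 - ((1 - u) ^+ 2) ^+ k))%:E.
Proof.
elim: k => [|k IHk].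
  rewrite expr0 subrr mulr0 addr0 -(expectation_cst P).
  by congr expectation; apply/funext => w /=; lra.
have -> : (fun w => H k.+1 w * H k.+1 w) = (fun w => ((1 - u) ^+ 2 * (H k w * H k w)
    + 2 * (1 - u) * u * (H k w * psi r k.+1 w)) + u ^+ 2 * psi r k.+1 w).
  apply/funext => w; rewrite HhatS; have := psi_idem r k.+1 w.
  by move: (psi r k.+1 w) (H k w) => p h pp; rewrite -[in u ^+ 2 * p]pp; ring.
have bH := bounded_measurable_Hhat k.
have bHH := bounded_measurableM bH bH.
have bHpsi := bounded_measurableM bH (psi_bounded k.+1).
have bpsi := psi_bounded k.+1.
rewrite expectation_boundedD; last 2 first.
- by apply: bounded_measurableD; exact: bounded_measurableZ.
- exact: bounded_measurableZ.
rewrite expectation_boundedD; try exact: bounded_measurableZ.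
rewrite !expectation_boundedZ // IHk expectation_HhatM_psi // psi_mean //.
rewrite -!EFinM -!EFinD; congr EFin.
rewrite [in RHS]exprS; move: (((1 - u) ^+ 2) ^+ k) => z.
by field; rewrite ell_neq0 ell2_neq0.
Qed.

Lemma variance_Hhat k : 'V_P[H k]%E = (Vinf * (1 - ((1 - u) ^+ 2) ^+ k))%:E.
Proof.
rewrite (variance_bounded (bounded_measurable_Hhat k) (expectation_Hhat k)).
by rewrite expectation_Hhat_sqr -EFinB; congr EFin; lra.
Qed.

Lemma cvg_variance_Hhat : 'V_P[H k]%E @[k --> \oo] --> Vinf%:E.
Proof.
have u_gt0 : 0 < u by rewrite invr_gt0 ltr0n.
have u_le1 : u <= 1 by rewrite invf_le1 ?ler1n ?ltr0n.
rewrite (funext variance_Hhat); apply: cvg_EFin; first exact: nearW.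
by apply: cvg_mul_one_subX; rewrite ger0_norm ?sqr_ge0 //; nra.
Qed.

End estimator.

Theorem lemma3 (d : measure_display) (T : measurableType d) (R : realType)
  (P : probability T R) (r : nat -> {RV P >-> R}) (ell : nat) :
  (10 <= ell)%N ->
  mutually_independent P (fun k => (r k : T -> R)) ->
  (forall k, P (r k @^-1` [set x | x < 0]) = (1 / 2)%:E) ->
  (forall k, P (r k @^-1` [set x | 0 < x]) = (1 / 2)%:E) ->
  let EH : R := 1 / 2 in
  ('E_P[Hhat ell (fun k => (r k : T -> R)) k] @[k --> \oo] --> EH%:E)%E /\
  ('V_P[Hhat ell (fun k => (r k : T -> R)) k] @[k --> \oo]
     --> (EH * (1 - EH) / (2 * ell%:R - 1))%:E)%E /\
  EH * (1 - EH) / (2 * ell%:R - 1) = 1 / (4 * (2 * ell%:R - 1)).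
Proof.
move=> ell_ge10 r_indep r_neg r_pos EH.
have ell_gt0 : (0 < ell)%N by apply: leq_trans ell_ge10.
have r_measurable k : measurable_fun setT (r k : T -> R) by exact: measurable_funPT.
have psi_bounded := bounded_measurable_psi r_measurable.
have psi_mean := expectation_psi r_measurable r_indep r_neg r_pos.
have psi_corr := expectation_psiM r_measurable r_indep r_neg r_pos.
have ell_ge1 : (1 : R) <= ell%:R by rewrite ler1n.
have limitE : EH * (1 - EH) / (2 * ell%:R - 1) = 1 / (4 * (2 * ell%:R - 1)).
  by rewrite /EH; field; apply/eqP; lra.
split; last split => //.
- by rewrite (funext (expectation_Hhat psi_bounded psi_mean ell)); exact: cvg_cst.
- by rewrite limitE; exact: cvg_variance_Hhat.
Qed.
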